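(* Let $G=(V,E)$ be a directed unweighted graph with finite diameter $D=3h+z$, where $h\ge 0$ and $z\in\{0,1,2\}$, and let $s\in[1,n]$. Let $w\in V$ satisfy $d_s^{\mathrm{out}}(w)=\max_{v\in V}d_s^{\mathrm{out}}(v)$ and let $S\subseteq V$ be any set with $S\cap N_s^{\mathrm{out}}(v)\neq\emptyset$ for every $v\in V$. Let $\hat D$ be the maximum of $d^{\mathrm{out}}(w)$, $\max_{u\in N_s^{\mathrm{out}}(w)}d^{\mathrm{in}}(u)$ and $\max_{u\in S}d^{\mathrm{out}}(u)$. Then $\hat D\le D$; moreover $\hat D\ge 2h+z$ if $z\in\{0,1\}$ and $\hat D\ge 2h+1$ if $z=2$.
   Context: $d(u,v)$ is the shortest-path distance from $u$ to $v$; $d^{\mathrm{out}}(v)=\max_u d(v,u)$, $d^{\mathrm{in}}(v)=\max_u d(u,v)$. $N_s^{\mathrm{out}}(v)$ is the set of the $s$ vertices $u$ with smallest $d(v,u)$, ties broken by smaller vertex id; $d_s^{\mathrm{out}}(v)=\max_{u\in N_s^{\mathrm{out}}(v)} d(v,u)$. *)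

From mathcomp Require Import all_boot.
Set Implicit Arguments. Unset Strict Implicit. Unset Printing Implicit Defensive.

Fixpoint ball n (e : rel 'I_n) (k : nat) (u : 'I_n) : {set 'I_n} :=
  match k with
  | 0 => [set u]
  | k'.+1 => ball e k' u :|: [set y | [exists x in ball e k' u, e x y]]
  end.

(* shortest-path distance d(u,v): least k with v in ball e k u.
   (Every shortest path has < n arcs, so searching k in [0, n) suffices when v is
   reachable from u; under strong connectivity this is exactly d(u,v).) *)
Definition dist n (e : rel 'I_n) (u v : 'I_n) : nat :=
  find (fun k => v \in ball e k u) (iota 0 n).

Definition dout n (e : rel 'I_n) (v : 'I_n) : nat := \max_(u : 'I_n) dist e v u.
Definition din n (e : rel 'I_n) (v : 'I_n) : nat := \max_(u : 'I_n) dist e u v.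
Definition diam n (e : rel 'I_n) : nat := \max_(u : 'I_n) dout e u.

Definition closer n (e : rel 'I_n) (v x u : 'I_n) : bool :=
  (dist e v x < dist e v u) || ((dist e v x == dist e v u) && (x < u)).

(* N_s^out(v): the s vertices u with smallest d(v,u), ties broken by smaller id,
   i.e. those u with fewer than s vertices strictly before them in this order. *)
Definition Nout n (e : rel 'I_n) (s : nat) (v : 'I_n) : {set 'I_n} :=
  [set u | #|[set x | closer e v x u]| < s].

Definition dsout n (e : rel 'I_n) (s : nat) (v : 'I_n) : nat :=
  \max_(u in Nout e s v) dist e v u.

From mathcomp Require Import all_boot.
From mathcomp Require Import zify.
Set Implicit Arguments. Unset Strict Implicit.

(* Let D be the diameter, realised by a pair a, b with
   d(a,b) = D, and let m = min(z,1), so the claim is 2h + m <= Dhat <= D.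
   The upper bound is immediate: every distance, hence every eccentricity
   d^out / d^in, is at most D.  For the lower bound distinguish two cases.
   - If d_s^out(a) <= h, the vertex u of S in N_s^out(a) satisfies
     d(a,u) <= h, so D <= d(a,u) + d(u,b) <= h + d^out(u): d^out(u) >= 2h + z.
   - Otherwise d_s^out(w) >= d_s^out(a) > h.  Then N_s^out(w) contains the
     whole ball of radius h around w; take x at distance <= h from w on a
     shortest w-b path, so d(x,b) <= d^out(w) - h and
     D <= d(a,x) + d(x,b) <= d^in(x) + d^out(w) - h,
     whence 2 Dhat >= 4h + z, i.e. Dhat >= 2h + m. *)

Section Balls.
Variables (n : nat) (e : rel 'I_n).

Lemma ball_cat j k u x y :
  x \in ball e j u -> y \in ball e k x -> y \in ball e (j + k) u.
Proof.
move=> ux; elim: k y => [|k IH] y /=; first by rewrite in_set1 addn0 => /eqP ->.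
rewrite addnS /= !in_setU => /orP [/IH -> //|].
rewrite inE => /existsP [z /andP [xz zy]].
by apply/orP; right; rewrite inE; apply/existsP; exists z; rewrite IH.
Qed.

Lemma ball_split j k u y :
  y \in ball e (j + k) u -> exists2 x, x \in ball e j u & y \in ball e k x.
Proof.
elim: k y => [|k IH] y; first by rewrite addn0 => uy; exists y; rewrite ?in_set1.
rewrite addnS /= in_setU => /orP [/IH [x ux xy]|].
  by exists x => //; rewrite in_setU xy.
rewrite inE => /existsP [z /andP [uz zy]].
have [x ux xz] := IH _ uz.
exists x => //; rewrite in_setU; apply/orP; right; rewrite inE.
by apply/existsP; exists z; rewrite xz.
Qed.

Lemma ball_path x p : path e x p -> last x p \in ball e (size p) x.
Proof.
elim: p x => [|y p IH] x /=; first by rewrite in_set1.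
move=> /andP [xy py].
have y1 : y \in ball e 1 x.
  rewrite /= in_setU; apply/orP; right; rewrite inE.
  by apply/existsP; exists x; rewrite in_set1 eqxx.
by have := ball_cat y1 (IH _ py); rewrite add1n.
Qed.

End Balls.

Section Distance.
Variables (n : nat) (e : rel 'I_n).
Hypothesis hconn : forall u v : 'I_n, connect e u v.

(* In a strongly connected graph every vertex is reached in fewer than n steps,
   along a duplicate-free path. *)
Lemma reach_lt_n u v : exists2 k, k < n & v \in ball e k u.
Proof.
have /connectP [p ep ->] := hconn u v.
case: (shortenP ep) => p' ep' uniq_p' _.
exists (size p'); last exact: ball_path.
by have := max_card (mem (u :: p')); rewrite card_ord (card_uniqP uniq_p').
Qed.

Lemma dist_ball u v : v \in ball e (dist e u v) u.
Proof.
have [k kn ukv] := reach_lt_n u v.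
have hasP_uv : has (fun k => v \in ball e k u) (iota 0 n).
  by apply/hasP; exists k; rewrite ?mem_iota.
have find_lt : find (fun k => v \in ball e k u) (iota 0 n) < n.
  by have := has_find (fun k => v \in ball e k u) (iota 0 n); rewrite hasP_uv size_iota.
by have := nth_find 0 hasP_uv; rewrite nth_iota.
Qed.

Lemma dist_le u v k : v \in ball e k u -> dist e u v <= k.
Proof.
move=> ukv; rewrite leqNgt; apply/negP => lt_k.
have kn : k < n.
  apply: leq_trans lt_k _.
  by have := find_size (fun k => v \in ball e k u) (iota 0 n); rewrite size_iota.
by have := before_find 0 lt_k; rewrite nth_iota // add0n ukv.
Qed.

Lemma dist_triangle u x v : dist e u v <= dist e u x + dist e x v.
Proof. exact/dist_le/(ball_cat (dist_ball u x) (dist_ball x v)). Qed.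

Lemma dist_split k u v :
  exists2 x, dist e u x <= k & dist e x v <= dist e u v - k.
Proof.
have split_d : minn k (dist e u v) + (dist e u v - k) = dist e u v by lia.
have := dist_ball u v; rewrite -{1}split_d => /ball_split [x ux xv].
by exists x; [apply: leq_trans (dist_le ux) (geq_minl _ _) | apply: dist_le].
Qed.

End Distance.

Section Eccentricity.
Variables (n : nat) (e : rel 'I_n).

Lemma dist_le_dout u v : dist e u v <= dout e u.
Proof. exact: leq_bigmax. Qed.

Lemma dist_le_din u v : dist e u v <= din e v.
Proof. exact: leq_bigmax. Qed.

Lemma dout_le_diam u : dout e u <= diam e.
Proof. exact: leq_bigmax. Qed.

Lemma din_le_diam u : din e u <= diam e.
Proof.
apply/bigmax_leqP => v _.
exact: leq_trans (dist_le_dout v u) (dout_le_diam v).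
Qed.

Lemma diam_attained (v0 : 'I_n) : exists a b, dist e a b = diam e.
Proof.
have n0 : 0 < #|'I_n| by apply/card_gt0P; exists v0.
have [a da] := eq_bigmax (dout e) n0.
have [b db] := eq_bigmax (dist e a) n0.
by exists a, b; rewrite /diam da /dout -db.
Qed.

End Eccentricity.

Section Neighbourhood.
Variables (n : nat) (e : rel 'I_n) (s : nat).

Lemma closer_trans v x y u : closer e v x y -> closer e v y u -> closer e v x u.
Proof.
rewrite /closer.
case/orP => [lt1|/andP [/eqP eq1 lt1]]; case/orP => [lt2|/andP [/eqP eq2 lt2]].
- by rewrite (ltn_trans lt1 lt2).
- by rewrite -eq2 lt1.
- by rewrite eq1 lt2.
- by rewrite eq1 eq2 eqxx (ltn_trans lt1 lt2) orbT.
Qed.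

(* N_s^out(v) is closed downwards: a vertex strictly nearer to v than a member
   has strictly fewer vertices before it. *)
Lemma Nout_nearer v x u :
  u \in Nout e s v -> dist e v x < dist e v u -> x \in Nout e s v.
Proof.
rewrite !inE => u_in xu; apply: leq_trans u_in; rewrite ltnS.
apply/ltnW/proper_card/properP; split.
  apply/subsetP => y; rewrite !inE => yx.
  by apply: closer_trans yx _; rewrite /closer xu.
by exists x; rewrite !inE /closer ?ltnn ?andbF // xu.
Qed.

Lemma dist_le_dsout v u : u \in Nout e s v -> dist e v u <= dsout e s v.
Proof. exact: leq_bigmax_cond. Qed.

Lemma Nout_ball v k x :
  k < dsout e s v -> dist e v x <= k -> x \in Nout e s v.
Proof.
move=> k_lt vx; have [u u_in ku] : exists2 u, u \in Nout e s v & k < dist e v u.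
  apply/exists_inP; move: k_lt; apply: contraLR; rewrite negb_exists_in -leqNgt.
  by move=> /forall_inP far; apply/bigmax_leqP => u /far; rewrite -leqNgt.
exact: Nout_nearer u_in (leq_ltn_trans vx ku).
Qed.

End Neighbourhood.

Theorem lemma4 (n : nat) (e : rel 'I_n)
  (* finite diameter: every vertex reaches every vertex *)
  (hconn : forall u v : 'I_n, connect e u v)
  (h z : nat) (hz : z <= 2) (hD : diam e = 3 * h + z)
  (s : nat) (hs : 1 <= s <= n)
  (w : 'I_n) (hw : dsout e s w = \max_(v : 'I_n) dsout e s v)
  (S : {set 'I_n}) (hS : forall v : 'I_n, S :&: Nout e s v != set0) :
  let Dhat := maxn (dout e w)
                (maxn (\max_(u in Nout e s w) din e u) (\max_(u in S) dout e u)) in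
  Dhat <= diam e /\
  (z <= 1 -> 2 * h + z <= Dhat) /\
  (z = 2 -> 2 * h + 1 <= Dhat).
Proof.
move=> Dhat.
have dout_w : dout e w <= Dhat by rewrite leq_maxl.
have din_N u : u \in Nout e s w -> din e u <= Dhat.
  by move=> u_in; rewrite !leq_max (leq_bigmax_cond _ u_in) orbT.
have dout_S u : u \in S -> dout e u <= Dhat.
  by move=> uS; rewrite !leq_max (leq_bigmax_cond _ uS) !orbT.
have upper : Dhat <= diam e.
  rewrite !geq_max dout_le_diam; apply/and3P; split => //; apply/bigmax_leqP => u _.
    exact: din_le_diam.
  exact: dout_le_diam.
suff lower : 2 * h + minn z 1 <= Dhat by split=> //; split => hz1; lia.
have [a [b dab]] := diam_attained e w.
case: (leqP (dsout e s a) h) => [small_a|big_a].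
- (* the vertex of S near a has out-eccentricity at least D - h *)
  have /set0Pn [u] := hS a; rewrite inE => /andP [uS uN].
  have := dist_le_dsout uN; have := dist_triangle hconn a u b.
  have := dist_le_dout e u b; have := dout_S _ uS; lia.
- (* a vertex of N_s^out(w) on a shortest w-b path has large in-eccentricity *)
  have big_w : h < dsout e s w by rewrite hw (leq_trans big_a) ?leq_bigmax.
  have [x wx xb] := dist_split hconn h w b.
  have := din_N _ (Nout_ball big_w wx); have := dist_le_din e a x.
  have := dist_triangle hconn a x b; have := dist_le_dout e w b; lia.
Qed.
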